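(* The $\alpha$-expansion algorithm provides no approximation guarantee better than $\frac12$ for the clique inference problem, even for the homogeneous Potts clique potential $C(\mathbf{v})=\lambda\sum_v n_v(\mathbf{v})^2$ with nonnegative vertex potentials: for every $\varepsilon>0$ there is such an instance (with $\lambda=1$) and an assignment $\tilde{\mathbf{v}}$ which is locally optimal with respect to every $\alpha$-expansion move (so that $\alpha$-expansion terminates at $\tilde{\mathbf{v}}$ when started from it) with $F(\tilde{\mathbf{v}})\le(\frac12+\varepsilon)\max_{\mathbf{v}}F(\mathbf{v})$.
   Context: Clique inference problem: there are $n$ vertices $1,\dots,n$, a finite set $V$ of values, real vertex potentials $\psi_{jv}$, and a clique potential $C$ depending only on the counts $n_v(\mathbf{v})=|\{j:v_j=v\}|$; the objective is $F(\mathbf{v})=\sum_{j}\psi_{jv_j}+C(\mathbf{v})$ over $\mathbf{v}\in V^n$. An $\alpha$-expansion move from an assignment $\tilde{\mathbf{v}}$ (for $\alpha\in V$) replaces $\tilde{\mathbf{v}}$ by an assignment maximizing $F$ among all assignments obtained from $\tilde{\mathbf{v}}$ by switching some subset of vertices to the value $\alpha$ (other vertices keep their values). The $\alpha$-expansion algorithm starts from an initial assignment (e.g. all vertices assigned the first value) and repeatedly performs optimal $\alpha$-expansion moves for each $\alpha\in V$ in turn, stopping when in a full round over all values no vertex changes its value. *)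

From mathcomp Require Import all_boot all_order all_algebra.
From mathcomp Require Import reals.
Set Implicit Arguments. Unset Strict Implicit. Unset Printing Implicit Defensive.
Import Order.TTheory GRing.Theory Num.Theory.
Local Open Scope ring_scope.

Definition assignment (n : nat) (V : finType) := {ffun 'I_n -> V}.

Definition nval (n : nat) (V : finType) (x : assignment n V) (v : V) : nat :=
  #|[set j | x j == v]|.

Definition potts (R : realType) (lambda : R) (n : nat) (V : finType)
  (x : assignment n V) : R :=
  lambda * \sum_(v : V) ((nval x v)%:R ^+ 2).

Definition objF (R : realType) (n : nat) (V : finType) (psi : 'I_n -> V -> R)
  (C : assignment n V -> R) (x : assignment n V) : R :=
  \sum_(j < n) psi j (x j) + C x.

Definition expansion_of (n : nat) (V : finType) (x : assignment n V) (alpha : V)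
  (y : assignment n V) : Prop :=
  forall j, y j = x j \/ y j = alpha.

Definition expansion_locally_optimal (R : realType) (n : nat) (V : finType)
  (psi : 'I_n -> V -> R) (C : assignment n V -> R) (x : assignment n V) : Prop :=
  forall (alpha : V) (y : assignment n V),
    expansion_of x alpha y -> objF psi C y <= objF psi C x.

From mathcomp Require Import all_boot all_order all_algebra.
From mathcomp Require Import reals zify ring.
Import Order.TTheory GRing.Theory Num.Theory.
Set Implicit Arguments. Unset Strict Implicit.

(* Give every vertex j a shared value, with potential 2, and a value of its
   own, with potential 2n (and 0 for any other vertex).  With everyone on the
   shared value, F = 2n + n^2.  An alpha-expansion towards the own value of i
   moving k vertices gains at most 2n on the potentials but lowers the clique
   term from n^2 to (n-k)^2 + k^2, i.e. by 2k(n-k), and loses 2k on the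
   potentials; since k(n-k+1) >= n no expansion improves.  Putting every
   vertex on its own value gives F >= 2n^2, so the ratio is
   (n^2 + 2n) / 2n^2 <= 1/2 + 1/n. *)

Section TwoValued.

Variables (n : nat) (V : finType) (a b : V) (y : assignment n V).
Hypotheses (neq_ab : a != b) (y_ab : forall j, y j = a \/ y j = b).

Lemma nval_two_valued : nval y a + nval y b = n.
Proof.
rewrite /nval; have -> : [set j | y j == a] = ~: [set j | y j == b].
  apply/setP => j; rewrite !inE.
  by case: (y_ab j) => ->; rewrite eqxx ?(negbTE neq_ab) // eq_sym (negbTE neq_ab).
by rewrite addnC cardsC card_ord.
Qed.

Lemma sum_nval_sq_two_valued :
  \sum_(v : V) nval y v ^ 2 = nval y a ^ 2 + nval y b ^ 2.
Proof.
rewrite (bigD1 a) //= (bigD1 b) 1?eq_sym //= big1 ?addn0 // => v /andP [vb va].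
rewrite /nval; suff -> : [set j | y j == v] = set0 by rewrite cards0.
apply/setP => j; rewrite !inE.
by case: (y_ab j) => ->; rewrite eq_sym ?(negbTE va) ?(negbTE vb).
Qed.

End TwoValued.

Lemma sum_nat_indicator (T : finType) (P : pred T) :
  \sum_(t : T) (P t : nat) = #|[set t | P t]|.
Proof.
by rewrite -sum1_card [RHS]big_mkcond; apply: eq_bigr => t _; rewrite inE; case: (P t).
Qed.

Section GapInstance.

Variable n : nat.

(* [None] is the shared value and [Some j] the own value of vertex [j]. *)
Definition gap_potential (j : 'I_n) (v : option 'I_n) : nat :=
  if v is Some i then (i == j) * (2 * n) else 2.

Definition nown (y : assignment n (option 'I_n)) : nat :=
  #|[set j | y j == Some j]|.

Definition gap_value (y : assignment n (option 'I_n)) : nat :=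
  \sum_(j < n) gap_potential j (y j) + \sum_(v : option 'I_n) nval y v ^ 2.

Lemma gap_valueE y :
  gap_value y =
    2 * nval y None + nown y * (2 * n) + \sum_(v : option 'I_n) nval y v ^ 2.
Proof.
congr (_ + _).
rewrite /nval /nown -!sum_nat_indicator big_distrr big_distrl -big_split.
by apply: eq_bigr => j _; case: (y j) => [i|] /=; rewrite ?muln0 ?add0n // eq_sym.
Qed.

Section TwoValuedAt.

Variables (i : 'I_n) (y : assignment n (option 'I_n)).
Hypothesis y_i : forall j, y j = None \/ y j = Some i.

Lemma nown_two_valued : nown y <= 1 /\ nown y <= nval y (Some i).
Proof.
have own_i j : y j == Some j -> j = i /\ y j = Some i.
  by case: (y_i j) => -> // /eqP [<-].
split; [rewrite -(cards1 i) |]; apply/subset_leq_card/subsetP => j;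
  by rewrite !inE => /own_i [-> yi]; rewrite ?yi eqxx.
Qed.

Lemma gap_value_two_valued : gap_value y <= 2 * n + n ^ 2.
Proof.
have [own_le1 own_le] := nown_two_valued.
rewrite gap_valueE (sum_nval_sq_two_valued _ y_i) //.
have := @nval_two_valued _ _ None (Some i) y isT y_i.
move: (nval y None) (nval y (Some i)) (nown y) own_le1 own_le => m k f.
nia.
Qed.

End TwoValuedAt.

Definition all_shared : assignment n (option 'I_n) := [ffun=> None].

Definition all_own : assignment n (option 'I_n) := [ffun j => Some j].

Lemma gap_value_all_shared (i : 'I_n) : gap_value all_shared = 2 * n + n ^ 2.
Proof.
have shared_i j : all_shared j = None \/ all_shared j = Some i.
  by left; rewrite ffunE.
have nval_own : nval all_shared (Some i) = 0.
  by apply/eqP; rewrite cards_eq0; apply/eqP/setP => j; rewrite !inE ffunE.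
have nown0 : nown all_shared = 0.
  by apply/eqP; rewrite cards_eq0; apply/eqP/setP => j; rewrite !inE ffunE.
have nval_shared := @nval_two_valued _ _ None (Some i) _ isT shared_i.
rewrite nval_own addn0 in nval_shared.
rewrite gap_valueE (sum_nval_sq_two_valued _ shared_i) //.
by rewrite nval_shared nval_own nown0 !addn0.
Qed.

Lemma gap_value_all_own : 2 * n * n <= gap_value all_own.
Proof.
have nown_own : nown all_own = n.
  by rewrite /nown -[RHS]card_ord; apply: eq_card => j; rewrite !inE ffunE eqxx.
rewrite gap_valueE nown_own; nia.
Qed.

Lemma expansion_of_all_shared (i0 : 'I_n) alpha y :
  expansion_of all_shared alpha y -> exists i, forall j, y j = None \/ y j = Some i.
Proof.
move=> y_exp; exists (odflt i0 alpha) => j.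
case: (y_exp j) => ->; rewrite ?ffunE; first by left.
by case: alpha {y_exp} => [i|]; [right | left].
Qed.

End GapInstance.

Local Open Scope ring_scope.

Lemma exists_maximizer (disp : Order.disp_t) (T : orderType disp) (I : finType)
    (f : I -> T) (i0 : I) :
  exists i, forall j, (f j <= f i)%O.
Proof.
case: (Order.TotalTheory.arg_maxP f (isT : xpredT i0)) => i _ i_max.
by exists i => j; apply: i_max.
Qed.

Lemma half_plus_eps_bound (R : realFieldType) (eps N : R) :
  0 <= N -> 1 <= eps * N -> 2 * N + N ^+ 2 <= (2^-1 + eps) * (2 * N * N).
Proof.
move=> N_ge0 epsN_ge1.
have -> : (2^-1 + eps) * (2 * N * N) = N ^+ 2 + 2 * N * (eps * N).
  transitivity (2^-1 * 2 * (N * N) + 2 * N * (eps * N)); first by ring.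
  by rewrite mulVf ?pnatr_eq0 // mul1r expr2.
by rewrite addrC lerD2l -[X in X <= _]mulr1 ler_wpM2l // mulr_ge0.
Qed.

Definition gap_psi (R : realType) {n : nat} : 'I_n -> option 'I_n -> R :=
  fun j v => (gap_potential j v)%:R.

Lemma objF_gap (R : realType) n (y : assignment n (option 'I_n)) :
  objF (gap_psi R) (@potts R 1 n _) y = (gap_value y)%:R.
Proof.
rewrite /objF /potts mul1r natrD !natr_sum; congr (_ + _).
by apply: eq_bigr => v _; rewrite natrX.
Qed.

Lemma all_shared_expansion_locally_optimal (R : realType) n (i0 : 'I_n) :
  expansion_locally_optimal (gap_psi R) (@potts R 1 n _) (all_shared n).
Proof.
move=> alpha y /(expansion_of_all_shared i0) [i y_i].
by rewrite !objF_gap ler_nat (gap_value_all_shared i) (gap_value_two_valued y_i).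
Qed.

Theorem theorem6 (R : realType) (eps : R) :
  0 < eps ->
  exists (n : nat) (V : finType) (psi : 'I_n -> V -> R) (x : assignment n V),
    [/\ (0 < n)%N,
        (forall j v, 0 <= psi j v),
        expansion_locally_optimal psi (@potts R 1 n V) x &
        exists vstar : assignment n V,
          (forall y : assignment n V,
             objF psi (@potts R 1 n V) y <= objF psi (@potts R 1 n V) vstar) /\
          objF psi (@potts R 1 n V) x
            <= (2^-1 + eps) * objF psi (@potts R 1 n V) vstar].
Proof.
move=> eps_gt0; pose n := Num.Def.archi_bound eps^-1.
have n_big : eps^-1 < n%:R by apply: archi_boundP; rewrite invr_ge0 ltW.
have n_gt0 : (0 < n)%N by rewrite -(ltr0n R); apply: lt_trans n_big; rewrite invr_gt0.
have epsn_ge1 : 1 <= eps * n%:R.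
  by move: n_big; rewrite -[eps^-1]mulr1 ltr_pdivrMl // => /ltW.
pose F := objF (gap_psi R) (@potts R 1 n _).
exists n, (option 'I_n), (gap_psi R), (all_shared n); split.
- exact: n_gt0.
- by move=> j v; rewrite /gap_psi ler0n.
- exact: (all_shared_expansion_locally_optimal _ (Ordinal n_gt0)).
have [vstar vstar_max] := exists_maximizer F (all_shared n).
exists vstar; split => //.
have own_le : (2 * n * n)%:R <= F vstar.
  apply: le_trans (vstar_max (all_own n)).
  by rewrite /F objF_gap ler_nat gap_value_all_own.
rewrite objF_gap (gap_value_all_shared (Ordinal n_gt0)).
apply: le_trans (ler_wpM2l _ own_le); last by rewrite addr_ge0 ?invr_ge0 ?ltW.
by rewrite natrD natrX !natrM half_plus_eps_bound.
Qed.
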